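(* Let $T$ be a monad on $\mathbf{Set}$. The adjunction $\mathcal{O}\dashv\mathrm{pt}$ between $\mathbf{Top}$ and $\mathbf{Loc}$ lifts to an adjunction $\mathcal{O}\dashv\mathrm{pt}$ between the category $\mathrm{Comod}_T(\mathbf{Top})$ of $T$-comodels in $\mathbf{Top}$ and the category $\mathrm{Comod}_T(\mathbf{Loc})$ of $T$-comodels in $\mathbf{Loc}$.
   Context: A monad $T$ on $\mathbf{Set}$: sets $TA$, $\mathrm{return}\,a\in TA$, $\mathbin{\gg\!=}\colon TA\times(TB)^A\to TB$ with the monad laws. A $T$-comodel in a category with copowers ($A\cdot C$ the $A$-fold coproduct of $C$, injections $\upsilon_a$) is an object $W$ with maps $[\![t]\!]\colon W\to A\cdot W$ for all $t\in TA$, such that $[\![\mathrm{return}\,a]\!]=\upsilon_a$ and $[\![t\mathbin{\gg\!=}u]\!]=[[\![u(a)]\!]]_{a\in A}\circ[\![t]\!]$; a comodel map is $h\colon W\to W'$ with $[\![t]\!]\circ h=(A\cdot h)\circ[\![t]\!]$. $\mathbf{Loc}$ is the opposite of the category of frames; $\mathcal{O}\colon\mathbf{Top}\to\mathbf{Loc}$ sends a space to its frame of open sets and $\mathrm{pt}\colon\mathbf{Loc}\to\mathbf{Top}$ sends a locale to its space of points (frame maps $\mathcal{O}(L)\to\{\bot,\top\}$ with opens $\{x:x^{-1}(u)=\top\}$), and $\mathcal{O}\dashv\mathrm{pt}$. Lifting means that applying $\mathcal{O}$ and $\mathrm{pt}$ to comodels (using the induced maps on copowers) yields functors between the comodel categories,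 adjoint to each other, commuting with the forgetful functors to $\mathbf{Top}$ and $\mathbf{Loc}$. *)

From Stdlib Require Import ClassicalEpsilon.

Record Monad := {
  M :> Type -> Type;
  ret : forall A : Type, A -> M A;
  bind : forall A B : Type, M A -> (A -> M B) -> M B;
  bind_ret_l : forall A B (a : A) (f : A -> M B), bind A B (ret A a) f = f a;
  bind_ret_r : forall A (t : M A), bind A A t (ret A) = t;
  bind_assoc : forall A B C (t : M A) (f : A -> M B) (g : B -> M C),
      bind B C (bind A B t f) g = bind A C t (fun a => bind B C (f a) g)
}.
Arguments ret m {A} a.
Arguments bind m {A B} t f.

Set Implicit Arguments.
Unset Strict Implicit.

Record Space := {
  pts :> Type;
  isOpen : (pts -> Prop) -> Prop;
  open_true : isOpen (fun _ => True);
  open_and : forall U V, isOpen U -> isOpen V -> isOpen (fun x => U x /\ V x);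
  open_ex : forall (I : Type) (U : I -> pts -> Prop),
      (forall i, isOpen (U i)) -> isOpen (fun x => exists i, U i x)
}.

Arguments isOpen s U : clear implicits.
Arguments open_true s : clear implicits.

Definition continuous (X Y : Space) (f : X -> Y) : Prop :=
  forall U, isOpen Y U -> isOpen X (fun x => U (f x)).

Definition cmap (X Y : Space) := {f : X -> Y | continuous f}.

(* copower A . X in Top: A x X with A discrete (the A-fold coproduct);
   injection upsilon_a is x |-> (a, x). *)
Definition copow (A : Type) (X : Space) : Space.
Proof.
  refine {| pts := (A * pts X)%type;
            isOpen := fun U => forall a, isOpen X (fun x => U (a, x)) |}.
  - intros a; apply open_true.
  - intros U V HU HV a; apply open_and; auto.
  - intros I U HU a. apply (@open_ex X I (fun i x => U i (a, x))). intro i; apply HU.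
Defined.

Definition TopOps (T : Monad) (X : Space) := forall A : Type, T A -> cmap X (copow A X).

Definition is_top_comodel (T : Monad) (X : Space) (op : TopOps T X) : Prop :=
  (forall (A : Type) (a : A) (x : X), proj1_sig (op A (ret T a)) x = (a, x)) /\
  (forall (A B : Type) (t : T A) (u : A -> T B) (x : X),
     proj1_sig (op B (bind T t u)) x =
     proj1_sig (op B (u (fst (proj1_sig (op A t) x)))) (snd (proj1_sig (op A t) x))).

Definition is_top_comodel_map (T : Monad) (X Y : Space) (opX : TopOps T X)
  (opY : TopOps T Y) (h : X -> Y) : Prop :=
  continuous h /\
  forall (A : Type) (t : T A) (x : X),
    proj1_sig (opY A t) (h x) =
    (fst (proj1_sig (opX A t) x), h (snd (proj1_sig (opX A t) x))).

(* ---------- Frames (Loc = Frm^op) ---------- *)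
Record RawFrame := {
  fcar :> Type;
  fle : fcar -> fcar -> Prop;
  ftop : fcar;
  fmeet : fcar -> fcar -> fcar;
  fjoin : forall I : Type, (I -> fcar) -> fcar
}.
Arguments fle {r} _ _.
Arguments ftop {r}.
Arguments fmeet {r} _ _.
Arguments fjoin {r} I _.

Definition is_frame (L : RawFrame) : Prop :=
  (forall x : L, fle x x) /\
  (forall x y z : L, fle x y -> fle y z -> fle x z) /\
  (forall x y : L, fle x y -> fle y x -> x = y) /\
  (forall x : L, fle x ftop) /\
  (forall x y z : L, fle z (fmeet x y) <-> (fle z x /\ fle z y)) /\
  (forall (I : Type) (f : I -> L) (z : L), fle (fjoin I f) z <-> (forall i, fle (f i) z)) /\
  (forall (x : L) (I : Type) (f : I -> L), fmeet x (fjoin I f) = fjoin I (fun i => fmeet x (f i))).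

Definition frame_hom (L K : RawFrame) (h : L -> K) : Prop :=
  h ftop = ftop /\
  (forall x y : L, h (fmeet x y) = fmeet (h x) (h y)) /\
  (forall (I : Type) (f : I -> L), h (fjoin I f) = fjoin I (fun i => h (f i))).

Lemma frame_hom_comp (K L N : RawFrame) (f : K -> L) (g : L -> N) :
  frame_hom f -> frame_hom g -> frame_hom (fun x => g (f x)).
Proof.
  intros [f1 [f2 f3]] [g1 [g2 g3]]. split; [|split].
  - rewrite f1; exact g1.
  - intros x y; rewrite f2; apply g2.
  - intros I F; rewrite f3; apply g3.
Qed.

(* The frame of the copower A . L in Loc is the product frame L^A. *)
Definition fpow (A : Type) (L : RawFrame) : RawFrame := {|
  fcar := A -> L;
  fle := fun f g => forall a, fle (f a) (g a);
  ftop := fun _ => ftop;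
  fmeet := fun f g a => fmeet (f a) (g a);
  fjoin := fun I F a => fjoin I (fun i => F i a) |}.

(* ---------- T-comodels in Loc, written on frames ----------
   A locale map [[t]] : W -> A . W is a frame hom [[t]]^* : W^A -> W.
   upsilon_a^* is evaluation at a; the copairing [f_a]_a has
   [f_a]^* psi = (a |-> f_a^* psi). *)
Definition LocOps (T : Monad) (L : RawFrame) := forall A : Type, T A -> (A -> L) -> L.

Definition is_loc_comodel (T : Monad) (L : RawFrame) (op : LocOps T L) : Prop :=
  is_frame L /\
  (forall (A : Type) (t : T A), @frame_hom (fpow A L) L (op A t)) /\
  (forall (A : Type) (a : A) (phi : A -> L), op A (ret T a) phi = phi a) /\
  (forall (A B : Type) (t : T A) (u : A -> T B) (phi : B -> L),
     op B (bind T t u) phi = op A t (fun a => op B (u a) phi)).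

(* A comodel map of locales W -> W' is given by its frame hom h : W' -> W;
   [[t]] o h = (A . h) o [[t]] reads  h o [[t]]'^* = [[t]]^* o (h o -). *)
Definition is_loc_comodel_map (T : Monad) (L L' : RawFrame) (op : LocOps T L)
  (op' : LocOps T L') (h : L' -> L) : Prop :=
  frame_hom h /\
  forall (A : Type) (t : T A) (phi : A -> L'), h (op' A t phi) = op A t (fun a => h (phi a)).

Definition Opens (X : Space) : RawFrame := {|
  fcar := {U : X -> Prop | isOpen X U};
  fle := fun U V => forall x, proj1_sig U x -> proj1_sig V x;
  ftop := exist _ (fun _ => True) (open_true X);
  fmeet := fun U V => exist _ (fun x => proj1_sig U x /\ proj1_sig V x)
                        (open_and (proj2_sig U) (proj2_sig V));
  fjoin := fun I F => exist _ (fun x => exists i, proj1_sig (F i) x)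
                        (@open_ex X I (fun i => proj1_sig (F i)) (fun i => proj2_sig (F i))) |}.

Definition Opre (X Y : Space) (f : cmap X Y) (U : Opens Y) : Opens X :=
  exist _ (fun x => proj1_sig U (proj1_sig f x)) (proj2_sig f _ (proj2_sig U)).

(* inverse of the canonical comparison A . O(X) -> O(A . X) in Loc,
   as a frame map O(X)^A -> O(A . X) *)
Definition glue (A : Type) (X : Space) (phi : A -> Opens X) : Opens (copow A X) :=
  exist (fun U : copow A X -> Prop => isOpen (copow A X) U)
    (fun ax => proj1_sig (phi (fst ax)) (snd ax)) (fun a => proj2_sig (phi a)).

(* induced comodel structure on O(W): O(A . W) ~ A . O(W) composed with O[[t]] *)
Definition O_ops (T : Monad) (X : Space) (op : TopOps T X) : LocOps T (Opens X) :=
  fun A t phi => Opre (op A t) (glue phi).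

(* the frame {bot, top}, realised (classically) as Prop *)
Definition PropFrame : RawFrame := {|
  fcar := Prop;
  fle := fun P Q => P -> Q;
  ftop := True;
  fmeet := and;
  fjoin := fun I f => exists i, f i |}.

Definition point (L : RawFrame) := {p : L -> PropFrame | frame_hom p}.

Definition pt (L : RawFrame) : Space.
Proof.
  refine {| pts := point L;
            isOpen := fun U => exists u : L, forall p : point L, U p <-> proj1_sig p u |}.
  - exists ftop. intros p. destruct (proj2_sig p) as [Ht _]. rewrite Ht. simpl. tauto.
  - intros U V [u Hu] [v Hv]. exists (fmeet u v). intros p.
    destruct (proj2_sig p) as [_ [Hm _]]. rewrite Hm. simpl.
    specialize (Hu p); specialize (Hv p). tauto.
  - intros I U HU.
    exists (fjoin I (fun i => proj1_sig (constructive_indefinite_description _ (HU i)))).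
    intros p. destruct (proj2_sig p) as [_ [_ Hj]]. rewrite Hj. simpl. split.
    + intros [i Hi]. exists i.
      pose proof (proj2_sig (constructive_indefinite_description _ (HU i))) as Hu.
      exact (proj1 (Hu p) Hi).
    + intros [i Hi]. exists i.
      pose proof (proj2_sig (constructive_indefinite_description _ (HU i))) as Hu.
      exact (proj2 (Hu p) Hi).
Defined.

(* pt on a locale map L -> L' given by the frame hom h : L' -> L *)
Definition ptmap (L L' : RawFrame) (h : L' -> L) (Hh : frame_hom h) (p : pt L) : pt L' :=
  exist _ (fun u => proj1_sig p (h u)) (frame_hom_comp Hh (proj2_sig p)).

(* A Top-structure on pt(W) is the one induced by pt([[t]]) via the
   canonical comparison c : A . pt(W) -> pt(A . W), c(a,q) = (phi |-> q (phi a)),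
   i.e. c o [[t]]_{pt W} = pt([[t]]). *)
Definition pt_compatible (T : Monad) (L : RawFrame) (lop : LocOps T L)
  (pop : TopOps T (pt L)) : Prop :=
  forall (A : Type) (t : T A) (p : point L) (phi : A -> L),
    proj1_sig (snd (proj1_sig (pop A t) p)) (phi (fst (proj1_sig (pop A t) p)))
    <-> proj1_sig p (lop A t phi).

(* ---------- transpose for O -| pt ----------
   a continuous f : X -> pt L corresponds to the frame hom L -> O(X),
   u |-> {x | f x u}. *)
Definition transpose (X : Space) (L : RawFrame) (f : cmap X (pt L)) (u : L) : Opens X :=
  exist _ (fun x => proj1_sig (proj1_sig f x) u)
    (proj2_sig f (fun p : point L => proj1_sig p u)
       (ex_intro _ u (fun p : point L => iff_refl (proj1_sig p u)))).

(** The heart of the matter is that [pt] sends the locale copower [A . L],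
    whose frame is the product [L^A], to the space copower [A . pt L]: the
    indicators [indicator L a] of [L^A] form a disjoint cover of the top, so
    a point of [L^A] selects exactly one index [a] and is then determined by its
    restriction to the constant elements.  Transporting the comodel operations
    [pt [[t]] : pt L -> pt (A . L)] along this bijection yields continuous
    operations, the comodel laws hold because they can be tested against points,
    and for the same reason the adjunction bijection [f |-> (u |-> f^-1 u)]
    identifies comodel maps on both sides.  On the side of [O] everything is a
    direct computation with preimages. *)

From Stdlib Require Import FunctionalExtensionality PropExtensionality
  ProofIrrelevance ClassicalEpsilon.
Set Implicit Arguments.
Unset Strict Implicit.

Lemma pred_sig_ext (B : Type) (P : (B -> Prop) -> Prop) (U V : {U : B -> Prop | P U}) :
  (forall x, proj1_sig U x <-> proj1_sig V x) -> U = V.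
Proof.
  intros H. apply eq_sig_hprop; [intros; apply proof_irrelevance|].
  extensionality x. apply propositional_extensionality, H.
Qed.

Lemma opens_ext (X : Space) (U V : Opens X) :
  (forall x, proj1_sig U x <-> proj1_sig V x) -> U = V.
Proof. apply pred_sig_ext. Qed.

Lemma point_ext (L : RawFrame) (p q : point L) :
  (forall u, proj1_sig p u <-> proj1_sig q u) -> p = q.
Proof. apply (@pred_sig_ext L (@frame_hom L PropFrame)). Qed.

Section FrameLaws.
Variables (L : RawFrame) (HL : is_frame L).

Lemma fle_trans (x y z : L) : fle x y -> fle y z -> fle x z.
Proof. destruct HL as (_ & H & _). apply H. Qed.

Lemma fle_antisym (x y : L) : fle x y -> fle y x -> x = y.
Proof. destruct HL as (_ & _ & H & _). apply H. Qed.

Lemma fle_top (x : L) : fle x ftop.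
Proof. destruct HL as (_ & _ & _ & H & _). apply H. Qed.

Lemma fle_fjoin (I : Type) (f : I -> L) (i : I) : fle (f i) (fjoin I f).
Proof.
  destruct HL as (Hrefl & _ & _ & _ & _ & Hjoin & _).
  exact (proj1 (Hjoin I f (fjoin I f)) (Hrefl _) i).
Qed.

Lemma fmeet_fjoin (x : L) (I : Type) (f : I -> L) :
  fmeet x (fjoin I f) = fjoin I (fun i => fmeet x (f i)).
Proof. destruct HL as (_ & _ & _ & _ & _ & _ & H). apply H. Qed.

End FrameLaws.

(* [indicator L a b] is [ftop] if [b = a] and the bottom otherwise; the join
   over the proof-irrelevant index type [b = a] avoids deciding equality on [A]. *)
Definition indicator (L : RawFrame) (A : Type) (a : A) : A -> L :=
  fun b => fjoin (b = a) (fun _ => ftop).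

Section Indicators.
Variables (L : RawFrame) (A : Type).

Lemma indicator_cover (HL : is_frame L) :
  @fjoin (fpow A L) A (@indicator L A) = @ftop (fpow A L).
Proof.
  extensionality b. apply (fle_antisym HL); [apply (fle_top HL)|].
  apply (fle_trans HL (y := indicator L b b)).
  - exact (fle_fjoin HL (fun _ : b = b => ftop) eq_refl).
  - exact (fle_fjoin HL (fun a => indicator L a b) b).
Qed.

Lemma fmeet_indicator (HL : is_frame L) (phi : A -> L) (a : A) :
  @fmeet (fpow A L) phi (indicator L a) = @fmeet (fpow A L) (fun _ => phi a) (indicator L a).
Proof.
  extensionality b. cbn. unfold indicator. rewrite !(fmeet_fjoin HL). f_equal.
  extensionality e. rewrite e. reflexivity.
Qed.

Lemma const_frame_hom : @frame_hom L (fpow A L) (fun u _ => u).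
Proof. repeat split. Qed.

End Indicators.

Section Points.
Variable L : RawFrame.
Implicit Type p : point L.

Lemma point_top p : proj1_sig p ftop.
Proof. destruct (proj2_sig p) as [Ht _]. rewrite Ht. exact I. Qed.

Lemma point_meet p (u v : L) :
  proj1_sig p (fmeet u v) <-> proj1_sig p u /\ proj1_sig p v.
Proof. destruct (proj2_sig p) as [_ [Hm _]]. rewrite Hm. reflexivity. Qed.

Lemma point_join p (I : Type) (f : I -> L) :
  proj1_sig p (fjoin I f) <-> exists i, proj1_sig p (f i).
Proof. destruct (proj2_sig p) as [_ [_ Hj]]. rewrite Hj. reflexivity. Qed.

Lemma point_indicator p (A : Type) (a b : A) : proj1_sig p (indicator L a b) <-> b = a.
Proof.
  unfold indicator. rewrite point_join. split; [intros [e _]; exact e|].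
  intros e. exists e. apply point_top.
Qed.

End Points.

Lemma ptmap_continuous (L L' : RawFrame) (h : L' -> L) (Hh : frame_hom h) :
  continuous (ptmap Hh).
Proof. intros U [u Hu]. exists (h u). intros p. apply (Hu (ptmap Hh p)). Qed.

Section CopowerPoints.
Variables (L : RawFrame) (A : Type).

Lemma copow_point_inj (x y : A * point L) :
  (forall phi : A -> L,
      proj1_sig (snd x) (phi (fst x)) <-> proj1_sig (snd y) (phi (fst y))) ->
  x = y.
Proof.
  destruct x as [a p], y as [b q]; simpl; intros H.
  assert (Hab : b = a).
  { apply (point_indicator q). apply H, point_indicator. reflexivity. }
  subst b. f_equal. apply point_ext. intros u. exact (H (fun _ => u)).
Qed.

Lemma fpow_point_decomp (HL : is_frame L) (q : point (fpow A L)) :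
  exists x : A * point L, forall phi, proj1_sig (snd x) (phi (fst x)) <-> proj1_sig q phi.
Proof.
  destruct (proj1 (point_join q (@indicator L A))) as [a Ha].
  { rewrite (indicator_cover A HL). apply point_top. }
  exists (a, ptmap (const_frame_hom L A) q). intros phi. simpl.
  assert (Hmeet : forall psi, proj1_sig q psi <-> proj1_sig q (@fmeet (fpow A L) psi (indicator L a)))
    by (intros psi; rewrite point_meet; tauto).
  rewrite (Hmeet phi), (fmeet_indicator HL), <- Hmeet. reflexivity.
Qed.

Definition copow_decomp (HL : is_frame L) (q : point (fpow A L)) : A * point L :=
  proj1_sig (constructive_indefinite_description _ (fpow_point_decomp HL q)).

Lemma copow_decomp_spec (HL : is_frame L) (q : point (fpow A L)) (phi : A -> L) :
  proj1_sig (snd (copow_decomp HL q)) (phi (fst (copow_decomp HL q))) <-> proj1_sig q phi.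
Proof.
  exact (proj2_sig (constructive_indefinite_description _ (fpow_point_decomp HL q)) phi).
Qed.

Lemma copow_decomp_ptmap_continuous (HL : is_frame L) (h : fpow A L -> L) (Hh : frame_hom h) :
  @continuous (pt L) (copow A (pt L)) (fun p => copow_decomp HL (ptmap Hh p)).
Proof.
  intros U HU.
  set (u := fun a => proj1_sig (constructive_indefinite_description _ (HU a))).
  exists (h u). intros p.
  rewrite <- (copow_decomp_spec HL (ptmap Hh p) u).
  destruct (copow_decomp HL (ptmap Hh p)) as [a r]. simpl.
  exact (proj2_sig (constructive_indefinite_description _ (HU a)) r).
Qed.

End CopowerPoints.

Lemma pt_compatible_eq (T : Monad) (L : RawFrame) (lop : LocOps T L)
  (pop : TopOps T (pt L)) (Hc : pt_compatible lop pop)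
  (A : Type) (t : T A) (p : pt L) (x : A * point L) :
  proj1_sig (pop A t) p = x <->
  forall phi, proj1_sig (snd x) (phi (fst x)) <-> proj1_sig p (lop A t phi).
Proof.
  split.
  - intros <- phi. apply Hc.
  - intros H. apply copow_point_inj. intros phi. rewrite H. apply Hc.
Qed.

Lemma pt_compatible_unique (T : Monad) (L : RawFrame) (lop : LocOps T L)
  (pop pop' : TopOps T (pt L)) :
  pt_compatible lop pop -> pt_compatible lop pop' ->
  forall (A : Type) (t : T A) (p : pt L), proj1_sig (pop A t) p = proj1_sig (pop' A t) p.
Proof. intros Hc Hc' A t p. symmetry. apply (pt_compatible_eq Hc'). apply Hc. Qed.

Definition pt_ops (T : Monad) (L : RawFrame) (lop : LocOps T L) (HL : is_loc_comodel lop) :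
  TopOps T (pt L) :=
  fun A t => exist _ _ (copow_decomp_ptmap_continuous (proj1 HL) (proj1 (proj2 HL) A t)).

Lemma pt_ops_compatible (T : Monad) (L : RawFrame) (lop : LocOps T L)
  (HL : is_loc_comodel lop) : pt_compatible lop (pt_ops HL).
Proof. intros A t p phi. apply copow_decomp_spec. Qed.

Lemma pt_compatible_comodel (T : Monad) (L : RawFrame) (lop : LocOps T L)
  (pop : TopOps T (pt L)) :
  is_loc_comodel lop -> pt_compatible lop pop -> is_top_comodel pop.
Proof.
  intros (_ & _ & Hret & Hbind) Hc. split.
  - intros A a p. apply (pt_compatible_eq Hc). intros phi. simpl. rewrite Hret. reflexivity.
  - intros A B t u p. apply (pt_compatible_eq Hc). intros phi.
    rewrite Hbind, <- (Hc A t p (fun a => lop B (u a) phi)). apply Hc.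
Qed.

Lemma ptmap_comodel_map (T : Monad) (L L' : RawFrame) (lop : LocOps T L) (lop' : LocOps T L')
  (pop : TopOps T (pt L)) (pop' : TopOps T (pt L')) (h : L' -> L) (Hh : frame_hom h) :
  pt_compatible lop pop -> pt_compatible lop' pop' ->
  is_loc_comodel_map lop lop' h -> is_top_comodel_map pop pop' (ptmap Hh).
Proof.
  intros Hc Hc' [_ Hmap]. split; [apply ptmap_continuous|].
  intros A t p. apply (pt_compatible_eq Hc'). intros phi. simpl.
  rewrite Hmap. exact (Hc A t p (fun a => h (phi a))).
Qed.

Lemma opens_frame (X : Space) : is_frame (Opens X).
Proof. repeat split; simpl; try (intros; apply opens_ext); firstorder. Qed.

Lemma opens_eval_frame_hom (X : Space) (x : X) :
  @frame_hom (Opens X) PropFrame (fun U => proj1_sig U x).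
Proof. repeat split. Qed.

Lemma Opre_frame_hom (X Y : Space) (f : cmap X Y) : frame_hom (Opre f).
Proof. split; [|split]; intros; apply opens_ext; reflexivity. Qed.

Lemma glue_frame_hom (A : Type) (X : Space) :
  @frame_hom (fpow A (Opens X)) (Opens (copow A X)) (@glue A X).
Proof. split; [|split]; intros; apply opens_ext; reflexivity. Qed.

Lemma Opre_eval (X Y : Space) (f : cmap X Y) (U : Opens Y) (x : X) :
  proj1_sig (Opre f U) x = proj1_sig U (proj1_sig f x).
Proof. reflexivity. Qed.

Lemma O_ops_eval (T : Monad) (X : Space) (op : TopOps T X)
  (A : Type) (t : T A) (phi : A -> Opens X) (x : X) :
  proj1_sig (O_ops op t phi) x =
  proj1_sig (phi (fst (proj1_sig (op A t) x))) (snd (proj1_sig (op A t) x)).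
Proof. reflexivity. Qed.

Lemma O_ops_comodel (T : Monad) (X : Space) (op : TopOps T X) :
  is_top_comodel op -> is_loc_comodel (O_ops op).
Proof.
  intros [Hret Hbind]. split; [apply opens_frame|split; [|split]].
  - intros A t. exact (frame_hom_comp (glue_frame_hom A X) (Opre_frame_hom (op A t))).
  - intros A a phi. apply opens_ext. intros x. rewrite O_ops_eval, Hret. reflexivity.
  - intros A B t u phi. apply opens_ext. intros x. rewrite !O_ops_eval, Hbind. reflexivity.
Qed.

Lemma Opre_comodel_map (T : Monad) (X Y : Space) (opX : TopOps T X) (opY : TopOps T Y)
  (h : cmap X Y) :
  is_top_comodel_map opX opY (proj1_sig h) ->
  is_loc_comodel_map (O_ops opX) (O_ops opY) (Opre h).
Proof.
  intros [_ Hmap]. split; [apply Opre_frame_hom|].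
  intros A t phi. apply opens_ext. intros x. rewrite Opre_eval, !O_ops_eval, Hmap. reflexivity.
Qed.

Lemma continuous_comp (X Y Z : Space) (f : X -> Y) (g : Y -> Z) :
  continuous f -> continuous g -> continuous (fun x => g (f x)).
Proof. intros Hf Hg U HU. exact (Hf _ (Hg U HU)). Qed.

Definition opens_point (X : Space) (x : X) : pt (Opens X) :=
  exist _ (fun U : Opens X => proj1_sig U x) (opens_eval_frame_hom x).

Lemma opens_point_continuous (X : Space) : continuous (@opens_point X).
Proof.
  intros U [u Hu].
  replace (fun x => U (opens_point x)) with (proj1_sig u); [exact (proj2_sig u)|].
  extensionality x. apply propositional_extensionality. symmetry. apply (Hu (opens_point x)).
Qed.

Lemma transpose_frame_hom (X : Space) (L : RawFrame) (f : cmap X (pt L)) :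
  frame_hom (transpose f).
Proof.
  split; [|split]; intros; apply opens_ext; intro; simpl.
  - split; [tauto|intros _; apply point_top].
  - apply point_meet.
  - apply point_join.
Qed.

Lemma transpose_onto (X : Space) (L : RawFrame) (g : L -> Opens X) :
  frame_hom g -> exists f : cmap X (pt L), transpose f = g.
Proof.
  intros Hg.
  (* [f = pt g o eta_X], where [eta_X = opens_point] is the unit of [O -| pt]. *)
  exists (exist _ _ (continuous_comp (@opens_point_continuous X) (ptmap_continuous Hg))).
  extensionality u. apply opens_ext. reflexivity.
Qed.

Lemma transpose_comodel_map_iff (T : Monad) (X : Space) (opX : TopOps T X)
  (L : RawFrame) (lop : LocOps T L) (pop : TopOps T (pt L)) (f : cmap X (pt L)) :
  pt_compatible lop pop ->
  is_top_comodel_map opX pop (proj1_sig f) <->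
  is_loc_comodel_map (O_ops opX) lop (transpose f).
Proof.
  intros Hc.
  assert (Hmap : forall A (t : T A),
    (forall x, proj1_sig (pop A t) (proj1_sig f x) =
               (fst (proj1_sig (opX A t) x), proj1_sig f (snd (proj1_sig (opX A t) x)))) <->
    (forall phi, transpose f (lop A t phi) = O_ops opX t (fun a => transpose f (phi a)))).
  { intros A t. split.
    - intros H phi. apply opens_ext. intros x. rewrite O_ops_eval. symmetry.
      exact (proj1 (pt_compatible_eq Hc _ _ _) (H x) phi).
    - intros H x. apply (pt_compatible_eq Hc). intros phi.
      pose proof (f_equal (fun U => proj1_sig U x) (H phi)) as E. cbv beta in E.
      rewrite O_ops_eval in E. simpl in E. simpl. rewrite <- E. reflexivity. }
  split.
  - intros [_ H]. split; [apply transpose_frame_hom|]. intros A t. apply Hmap, H.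
  - intros [_ H]. split; [exact (proj2_sig f)|]. intros A t. apply Hmap, H.
Qed.

Theorem proposition2p9 (T : Monad) :
  (* O lifts on objects *)
  (forall (X : Space) (op : TopOps T X),
      is_top_comodel op -> is_loc_comodel (O_ops op)) /\
  (* O lifts on morphisms *)
  (forall (X Y : Space) (opX : TopOps T X) (opY : TopOps T Y) (h : cmap X Y),
      is_top_comodel opX -> is_top_comodel opY ->
      is_top_comodel_map opX opY (proj1_sig h) ->
      is_loc_comodel_map (O_ops opX) (O_ops opY) (Opre h)) /\
  (* pt lifts on objects: the induced structure exists, is unique, is a comodel *)
  (forall (L : RawFrame) (lop : LocOps T L),
      is_loc_comodel lop ->
      (exists pop : TopOps T (pt L), pt_compatible lop pop /\ is_top_comodel pop) /\
      (forall pop pop' : TopOps T (pt L),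
          pt_compatible lop pop -> pt_compatible lop pop' ->
          forall (A : Type) (t : T A) (p : pt L),
            proj1_sig (pop A t) p = proj1_sig (pop' A t) p)) /\
  (* pt lifts on morphisms *)
  (forall (L L' : RawFrame) (lop : LocOps T L) (lop' : LocOps T L')
          (pop : TopOps T (pt L)) (pop' : TopOps T (pt L'))
          (h : L' -> L) (Hh : frame_hom h),
      is_loc_comodel lop -> is_loc_comodel lop' ->
      pt_compatible lop pop -> pt_compatible lop' pop' ->
      is_loc_comodel_map lop lop' h ->
      is_top_comodel_map pop pop' (ptmap Hh)) /\
  (* the adjunction bijection restricts to comodel maps *)
  (forall (X : Space) (opX : TopOps T X) (L : RawFrame) (lop : LocOps T L)
          (pop : TopOps T (pt L)),
      is_top_comodel opX -> is_loc_comodel lop -> pt_compatible lop pop ->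
      (forall f : cmap X (pt L),
          is_top_comodel_map opX pop (proj1_sig f) <->
          is_loc_comodel_map (O_ops opX) lop (transpose f)) /\
      (forall g : L -> Opens X,
          is_loc_comodel_map (O_ops opX) lop g ->
          exists f : cmap X (pt L),
            is_top_comodel_map opX pop (proj1_sig f) /\
            forall (u : L) (x : X), proj1_sig (transpose f u) x <-> proj1_sig (g u) x)).
Proof.
  split; [|split; [|split; [|split]]].
  - intros X op. apply O_ops_comodel.
  - intros X Y opX opY h _ _. apply Opre_comodel_map.
  - intros L lop HL. split.
    + exists (pt_ops HL). split; [apply pt_ops_compatible|].
      exact (pt_compatible_comodel HL (pt_ops_compatible HL)).
    + apply pt_compatible_unique.
  - intros L L' lop lop' pop pop' h Hh _ _. apply ptmap_comodel_map.
  - intros X opX L lop pop _ _ Hc. split.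
    + intros f. apply transpose_comodel_map_iff, Hc.
    + intros g Hg. destruct (transpose_onto (proj1 Hg)) as [f Hf]. exists f. split.
      * apply (transpose_comodel_map_iff _ _ Hc). rewrite Hf. exact Hg.
      * intros u x. rewrite Hf. reflexivity.
Qed.
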